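(* Let $\gamma:[0,1]\to\mathbb T^2$ be an arc-length parametrized unit length curve with curvature bounded below by a positive constant. For a positive integer $m$ let $\lambda=2\pi\sqrt m$, $\mathcal E_\lambda=\{\mu\in\mathbb Z^2:\|\mu\|^2=m\}$, $N=|\mathcal E_\lambda|$, and let $\Phi(x)=\sum_{\mu\in\mathcal E_\lambda}a_\mu e^{2\pi i\langle\mu,x\rangle}$ with $\sum_\mu|a_\mu|^2=1$. Suppose $\lambda$ satisfies $\min_{\mu_1\ne\mu_2\in\mathcal E_\lambda}\|\mu_1-\mu_2\|\gg\lambda/\log^{3/2+\varepsilon}\lambda$ for some $\varepsilon>0$, and let $I\subset[0,1]$ be an interval with $|I|>\lambda^{-1/2}(\log\lambda)^{3/4+\varepsilon}N$. Then $$\frac1{|I|}\int_I|\Phi(\gamma(t))|^2\,dt\ge\frac12.$$ *)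

From Stdlib Require Import Reals Lra ZArith List.
From Coquelicot Require Import Coquelicot.
Open Scope R_scope.

Definition zrange (m : nat) : list Z :=
  map (fun k => (Z.of_nat k - Z.of_nat m)%Z) (seq 0 (2 * m + 1)).

(* E_lambda = { mu in Z^2 : |mu|^2 = m }, listed without repetition
   (every such mu has coordinates in [-m, m]). *)
Definition Elam (m : nat) : list (Z * Z) :=
  filter (fun p => Z.eqb (fst p * fst p + snd p * snd p)%Z (Z.of_nat m))
         (list_prod (zrange m) (zrange m)).

Definition Ncard (m : nat) : nat := length (Elam m).

Definition lam (m : nat) : R := 2 * PI * sqrt (INR m).

Definition cexpi (th : R) : C := (cos th, sin th).

Definition Phi (m : nat) (a : Z * Z -> C) (x : R * R) : C :=
  fold_right Cplus 0%C
    (map (fun mu => Cmult (a mu)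
             (cexpi (2 * PI * (IZR (fst mu) * fst x + IZR (snd mu) * snd x))))
         (Elam m)).

Definition l2sq (m : nat) (a : Z * Z -> C) : R :=
  fold_right Rplus 0 (map (fun mu => (Cmod (a mu)) ^ 2) (Elam m)).

Definition zdist (p q : Z * Z) : R :=
  sqrt ((IZR (fst p) - IZR (fst q)) ^ 2 + (IZR (snd p) - IZR (snd q)) ^ 2).

Definition smooth (f : R -> R) : Prop :=
  forall (n : nat) (t : R), ex_derive (Derive_n f n) t.

From Stdlib Require Import Reals Lra ZArith List.
From Coquelicot Require Import Coquelicot.
Open Scope R_scope.

(* Expanding [|Φ(γ(t))|^2 = Σ_{μ,ν} a_μ conj(a_ν) e^{2πi<μ-ν, γ(t)>}], the diagonal contributes
   exactly [|I| Σ |a_μ|^2 = |I|]. An off-diagonal term is an oscillatory integral with phase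
   [φ = 2π<x, γ>], [x = μ - ν]. As [γ] has unit speed and curvature [>= κ0], at every point
   [|φ'| ≳ |x|] or [|φ''| ≳ |x|]; the van der Corput type bound
   [|∫ cos φ| <= 1/d + ∫ |φ''|/(φ'^2 + d^2) + ∫ d^2/(φ'^2 + d^2)], with [d = (2π|x|)^{1/2}]
   on pieces of fixed length, gives [|∫_I cos φ| <= K |x|^{-1/2}] uniformly in [I].
   Summing over pairs with weights [|a_μ|^2 + |a_ν|^2], the off-diagonal part is at most
   [2 N K sep^{-1/2}], and the separation hypothesis makes this at most
   [N λ^{-1/2} (log λ)^{3/4+ε} / 2 < |I|/2] once [(log λ)^ε >= 16 K^2 / C0]. *)

Lemma continuous_Rplus (f g : R -> R) x :
  continuous f x -> continuous g x -> continuous (fun y => f y + g y) x.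
Proof. intros; apply (continuous_plus f g); auto. Qed.

Lemma continuous_Rminus (f g : R -> R) x :
  continuous f x -> continuous g x -> continuous (fun y => f y - g y) x.
Proof. intros; apply (continuous_minus f g); auto. Qed.

Lemma continuous_Ropp (f : R -> R) x : continuous f x -> continuous (fun y => - f y) x.
Proof. intros; apply (continuous_opp f); auto. Qed.

Lemma continuous_Rmult (f g : R -> R) x :
  continuous f x -> continuous g x -> continuous (fun y => f y * g y) x.
Proof. intros; apply (continuous_mult f g); auto. Qed.

Lemma continuous_Rdiv (f g : R -> R) x :
  continuous f x -> continuous g x -> g x <> 0 -> continuous (fun y => f y / g y) x.
Proof. intros; apply continuous_Rmult; auto; apply continuous_Rinv_comp; auto. Qed.

Lemma continuous_Rsqr (f : R -> R) x : continuous f x -> continuous (fun y => f y ^ 2) x.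
Proof.
  intros; apply (continuous_ext (fun y => f y * f y)); [intros; simpl; ring|].
  apply continuous_Rmult; auto.
Qed.

Ltac solve_continuous := repeat match goal with
 | |- continuous (fun _ => ?c) _ => apply continuous_const
 | |- continuous (fun y => _ + _) _ => apply continuous_Rplus
 | |- continuous (fun y => _ - _) _ => apply continuous_Rminus
 | |- continuous (fun y => - _) _ => apply continuous_Ropp
 | |- continuous (fun y => _ * _) _ => apply continuous_Rmult
 | |- continuous (fun y => _ / _) _ => apply continuous_Rdiv
 | |- continuous (fun y => Rabs _) _ => apply continuous_Rabs_comp
 | |- continuous (fun y => _ ^ 2) _ => apply continuous_Rsqr
 | |- continuous (fun y => cos _) _ => apply continuous_cos_comp
 | |- continuous (fun y => sin _) _ => apply continuous_sin_comp
 | |- continuous _ _ => assumption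
 | H : forall t, continuous ?f t |- continuous ?f _ => apply H
 | |- continuous (fun y => ?f y) _ => progress (change (fun y => f y) with f)
 | |- _ ^ _ <> 0 => apply pow_nonzero
 | H : forall t, _ <> 0 |- _ <> 0 => apply H
end.

Ltac R_eq := match goal with |- ?a = ?b => change (@eq R a b) end.

Ltac solve_ex_RInt :=
  apply (ex_RInt_continuous (V := R_CompleteNormedModule)); intros; solve_continuous.

Lemma is_derive_Rplus (f g : R -> R) x df dg :
  is_derive f x df -> is_derive g x dg -> is_derive (fun y => f y + g y) x (df + dg).
Proof. intros; apply (is_derive_plus f g); auto. Qed.

Lemma is_derive_Rmult (f g : R -> R) x df dg :
  is_derive f x df -> is_derive g x dg ->
  is_derive (fun y => f y * g y) x (df * g x + f x * dg).
Proof. intros; apply (is_derive_mult f g); auto; intros; apply Rmult_comm. Qed.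

Lemma is_derive_Rconst (c x : R) : is_derive (fun _ => c) x 0.
Proof. apply (is_derive_const (K := R_AbsRing) (V := R_NormedModule)). Qed.

Lemma is_derive_Rsqr (f : R -> R) x df :
  is_derive f x df -> is_derive (fun y => f y ^ 2) x (2 * df * f x).
Proof.
  intros; replace (2 * df * f x) with (INR 2 * df * f x ^ Init.Nat.pred 2) by (simpl; ring).
  apply (is_derive_pow f 2); auto.
Qed.

Lemma is_derive_sin_comp (f : R -> R) x df :
  is_derive f x df -> is_derive (fun y => sin (f y)) x (df * cos (f x)).
Proof. intros; apply (is_derive_comp sin f); auto; apply is_derive_sin. Qed.

Lemma is_derive_atan_comp (f : R -> R) x df :
  is_derive f x df -> is_derive (fun y => atan (f y)) x (df * / (1 + (f x)²)).
Proof. intros; apply (is_derive_comp atan f); auto; apply is_derive_atan. Qed.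

Lemma is_derive_eq_val (f : R -> R) x l l' : is_derive f x l -> l = l' -> is_derive f x l'.
Proof. now intros H <-. Qed.

Lemma is_derive_continuous (f : R -> R) x l : is_derive f x l -> continuous f x.
Proof.
  intros H; apply (ex_derive_continuous (K := R_AbsRing) (V := R_NormedModule)).
  now exists l.
Qed.

Lemma Rabs_sin_mult_le (a y : R) : Rabs (sin a * y) <= Rabs y.
Proof.
  rewrite Rabs_mult; pose proof (Rabs_pos y).
  assert (Rabs (sin a) <= 1) by (apply Rabs_le, SIN_bound). nra.
Qed.

Lemma Rabs_cos_mult_le (a y : R) : Rabs (cos a * y) <= Rabs y.
Proof.
  rewrite Rabs_mult; pose proof (Rabs_pos y).
  assert (Rabs (cos a) <= 1) by (apply Rabs_le, COS_bound). nra.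
Qed.

Lemma Rabs_mult_diff_sq_div_le (p q d : R) : 0 < d ->
  Rabs (p * (d ^ 2 - q ^ 2) / (q ^ 2 + d ^ 2) ^ 2) <= Rabs p / (q ^ 2 + d ^ 2).
Proof.
  intros Hd; assert (HD : 0 < q ^ 2 + d ^ 2) by nra.
  rewrite Rabs_div, Rabs_mult, (Rabs_pos_eq ((_ + _) ^ 2)) by nra.
  assert (Rabs (d ^ 2 - q ^ 2) <= q ^ 2 + d ^ 2) by (apply Rabs_le; nra).
  apply (Rmult_le_reg_r ((q ^ 2 + d ^ 2) ^ 2)); [nra|].
  unfold Rdiv; rewrite Rmult_assoc, Rinv_l by nra.
  replace (Rabs p * / (q ^ 2 + d ^ 2) * (q ^ 2 + d ^ 2) ^ 2) with (Rabs p * (q ^ 2 + d ^ 2))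
    by (field; lra).
  pose proof (Rabs_pos p); nra.
Qed.

Lemma Rabs_div_sq_plus_le (q d : R) : 0 < d -> Rabs (q / (q ^ 2 + d ^ 2)) <= / (2 * d).
Proof.
  intros Hd; assert (HD : 0 < q ^ 2 + d ^ 2) by nra.
  rewrite Rabs_div, (Rabs_pos_eq (_ + _)) by nra.
  apply (Rmult_le_reg_r ((q ^ 2 + d ^ 2) * (2 * d))); [nra|].
  replace (Rabs q / (q ^ 2 + d ^ 2) * ((q ^ 2 + d ^ 2) * (2 * d))) with (2 * d * Rabs q)
    by (field; lra).
  replace (/ (2 * d) * ((q ^ 2 + d ^ 2) * (2 * d))) with (q ^ 2 + d ^ 2) by (field; lra).
  rewrite <- (pow2_abs q); pose proof (pow2_ge_0 (Rabs q - d)); nra.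
Qed.

(** * Van der Corput type estimates *)

(* Split [cos φ = φ' W cos φ + d^2/(φ'^2 + d^2) cos φ] and integrate the first part by parts,
   since [φ' cos φ = (sin φ)']. *)
Lemma RInt_cos_smoothing_eq (phi phi1 phi2 : R -> R) (s u d : R) :
  0 < d -> (forall t, is_derive phi t (phi1 t)) -> (forall t, is_derive phi1 t (phi2 t)) ->
  (forall t, continuous phi2 t) ->
  let W t := phi1 t / (phi1 t ^ 2 + d ^ 2) in
  RInt (fun t => cos (phi t)) s u =
  sin (phi u) * W u - sin (phi s) * W s
  - RInt (fun t => sin (phi t) * (phi2 t * (d ^ 2 - phi1 t ^ 2) / (phi1 t ^ 2 + d ^ 2) ^ 2)) s u
  + RInt (fun t => cos (phi t) * (d ^ 2 / (phi1 t ^ 2 + d ^ 2))) s u.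
Proof.
  intros Hd D0 D1 C2 W.
  assert (C0 : forall t, continuous phi t) by (intro; eapply is_derive_continuous, D0).
  assert (C1 : forall t, continuous phi1 t) by (intro; eapply is_derive_continuous, D1).
  assert (Dpos : forall t, phi1 t ^ 2 + d ^ 2 <> 0) by (intro; nra).
  set (main := fun t => cos (phi t) * phi1 t * W t).
  set (rest := fun t => sin (phi t) * (phi2 t * (d ^ 2 - phi1 t ^ 2) / (phi1 t ^ 2 + d ^ 2) ^ 2)).
  set (tail := fun t => cos (phi t) * (d ^ 2 / (phi1 t ^ 2 + d ^ 2))).
  assert (by_parts : is_RInt (fun t => main t + rest t) s u
                       (sin (phi u) * W u - sin (phi s) * W s)).
  { apply (is_RInt_derive (fun t => sin (phi t) * W t)); intros t _.
    - unfold main, rest, W; eapply is_derive_eq_val.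
      + apply is_derive_Rmult; [apply is_derive_sin_comp, D0|].
        apply is_derive_div; [apply D1| |apply Dpos].
        apply is_derive_Rplus; [apply is_derive_Rsqr, D1 | apply is_derive_Rconst].
      + cbv beta; R_eq; field; apply Dpos.
    - unfold main, rest, W; solve_continuous. }
  assert (Emain : ex_RInt main s u) by (unfold main, W; solve_ex_RInt).
  assert (Erest : ex_RInt rest s u) by (unfold rest; solve_ex_RInt).
  assert (Etail : ex_RInt tail s u) by (unfold tail; solve_ex_RInt).
  rewrite (RInt_ext _ (fun t => main t + tail t))
    by (intros t _; unfold main, tail, W; R_eq; field; apply Dpos).
  rewrite (RInt_plus (V := R_CompleteNormedModule)) by assumption.
  rewrite <- (is_RInt_unique _ _ _ _ by_parts).
  rewrite (RInt_plus (V := R_CompleteNormedModule)) by assumption.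
  change (plus ?x ?y) with (x + y); fold rest tail; R_eq; ring.
Qed.

Lemma RInt_cos_le_smoothing (phi phi1 phi2 : R -> R) (s u d : R) :
  s <= u -> 0 < d ->
  (forall t, is_derive phi t (phi1 t)) -> (forall t, is_derive phi1 t (phi2 t)) ->
  (forall t, continuous phi2 t) ->
  Rabs (RInt (fun t => cos (phi t)) s u) <=
  1 / d + RInt (fun t => Rabs (phi2 t) / (phi1 t ^ 2 + d ^ 2)) s u
        + RInt (fun t => d ^ 2 / (phi1 t ^ 2 + d ^ 2)) s u.
Proof.
  intros Hsu Hd D0 D1 C2.
  assert (C0 : forall t, continuous phi t) by (intro; eapply is_derive_continuous, D0).
  assert (C1 : forall t, continuous phi1 t) by (intro; eapply is_derive_continuous, D1).
  assert (Dpos : forall t, phi1 t ^ 2 + d ^ 2 <> 0) by (intro; nra).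
  rewrite (RInt_cos_smoothing_eq phi phi1 phi2 s u d) by assumption; cbv zeta.
  set (F := fun t => sin (phi t) * (phi1 t / (phi1 t ^ 2 + d ^ 2))).
  set (rest := RInt (fun t => sin (phi t) * (phi2 t * (d ^ 2 - phi1 t ^ 2)
                                              / (phi1 t ^ 2 + d ^ 2) ^ 2)) s u).
  set (tail := RInt (fun t => cos (phi t) * (d ^ 2 / (phi1 t ^ 2 + d ^ 2))) s u).
  assert (boundary : Rabs (F u - F s) <= 1 / d).
  { assert (HF : forall t, Rabs (F t) <= / (2 * d)).
    { intro t; eapply Rle_trans; [apply Rabs_sin_mult_le | apply Rabs_div_sq_plus_le; lra]. }
    eapply Rle_trans; [apply Rabs_triang|]; rewrite Rabs_Ropp.
    pose proof (HF u); pose proof (HF s).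
    replace (1 / d) with (/ (2 * d) + / (2 * d)) by (field; lra); lra. }
  assert (Hrest : Rabs rest <= RInt (fun t => Rabs (phi2 t) / (phi1 t ^ 2 + d ^ 2)) s u).
  { eapply Rle_trans; [apply abs_RInt_le; [assumption | solve_ex_RInt]|].
    apply RInt_le; auto; [solve_ex_RInt | solve_ex_RInt|].
    intros t _; eapply Rle_trans; [apply Rabs_sin_mult_le|].
    apply Rabs_mult_diff_sq_div_le; lra. }
  assert (Htail : Rabs tail <= RInt (fun t => d ^ 2 / (phi1 t ^ 2 + d ^ 2)) s u).
  { eapply Rle_trans; [apply abs_RInt_le; [assumption | solve_ex_RInt]|].
    apply RInt_le; auto; [solve_ex_RInt | solve_ex_RInt|].
    intros t _; eapply Rle_trans; [apply Rabs_cos_mult_le|].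
    rewrite Rabs_pos_eq; [lra|]; apply Rle_mult_inv_pos; nra. }
  fold (F u) (F s).
  pose proof (Rabs_triang (F u - F s - rest) tail) as T1.
  pose proof (Rabs_triang (F u - F s) (- rest)) as T2; rewrite Rabs_Ropp in T2.
  unfold Rminus in *; lra.
Qed.

Lemma RInt_cos_le_of_deriv_lb (phi phi1 phi2 : R -> R) (s u A B d : R) :
  s <= u -> u - s <= 1 -> 0 < A -> 0 < d ->
  (forall t, is_derive phi t (phi1 t)) -> (forall t, is_derive phi1 t (phi2 t)) ->
  (forall t, continuous phi2 t) ->
  (forall t, s <= t <= u -> A <= Rabs (phi1 t)) ->
  (forall t, s <= t <= u -> Rabs (phi2 t) <= B) ->
  Rabs (RInt (fun t => cos (phi t)) s u) <= 1 / d + B / A ^ 2 + d ^ 2 / A ^ 2.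
Proof.
  intros Hsu H1 HA Hd D0 D1 C2 Hphi1 Hphi2.
  assert (C1 : forall t, continuous phi1 t) by (intro; eapply is_derive_continuous, D1).
  assert (Dpos : forall t, phi1 t ^ 2 + d ^ 2 <> 0) by (intro; nra).
  assert (HB : 0 <= B) by (eapply Rle_trans; [apply Rabs_pos | apply (Hphi2 s); lra]).
  assert (Hsq : forall t, s <= t <= u -> A ^ 2 <= phi1 t ^ 2 + d ^ 2).
  { intros t Ht; rewrite <- (pow2_abs (phi1 t)); pose proof (Hphi1 t Ht); nra. }
  assert (RInt_le_bound : forall f c, 0 <= c -> ex_RInt f s u ->
            (forall t, s <= t <= u -> Rabs (f t) <= c) -> RInt f s u <= c).
  { intros f c Hc Ef Hf; eapply Rle_trans; [apply Rle_abs|].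
    eapply Rle_trans; [apply abs_RInt_le_const; eauto | nra]. }
  eapply Rle_trans; [apply (RInt_cos_le_smoothing phi phi1 phi2 s u d); auto|].
  apply Rplus_le_compat; [apply Rplus_le_compat_l|].
  - apply RInt_le_bound; [apply Rle_mult_inv_pos; nra | solve_ex_RInt|].
    intros t Ht; rewrite Rabs_pos_eq by (apply Rle_mult_inv_pos; [apply Rabs_pos | nra]).
    pose proof (Hsq t Ht); apply Rmult_le_compat; try apply Rabs_pos; auto.
    + apply Rlt_le, Rinv_0_lt_compat; nra.
    + apply Rinv_le_contravar; nra.
  - apply RInt_le_bound; [apply Rle_mult_inv_pos; nra | solve_ex_RInt|].
    intros t Ht; rewrite Rabs_pos_eq by (apply Rle_mult_inv_pos; nra).
    pose proof (Hsq t Ht); apply Rmult_le_compat_l; [nra|].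
    apply Rinv_le_contravar; nra.
Qed.

(* [atan (φ'/d) / d] is an antiderivative of [φ''/(φ'^2 + d^2)], and atan has range of
   length π. *)
Lemma RInt_cos_le_of_deriv2_lb (phi phi1 phi2 : R -> R) (s u m d : R) :
  s <= u -> 0 < m -> 0 < d ->
  (forall t, is_derive phi t (phi1 t)) -> (forall t, is_derive phi1 t (phi2 t)) ->
  (forall t, continuous phi2 t) ->
  (forall t, s <= t <= u -> m <= phi2 t) ->
  Rabs (RInt (fun t => cos (phi t)) s u) <= (1 + PI) / d + PI * d / m.
Proof.
  intros Hsu Hm Hd D0 D1 C2 Hphi2.
  assert (C1 : forall t, continuous phi1 t) by (intro; eapply is_derive_continuous, D1).
  assert (Dpos : forall t, phi1 t ^ 2 + d ^ 2 <> 0) by (intro; nra).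
  set (G := fun t => atan (phi1 t / d) / d).
  assert (IG : is_RInt (fun t => phi2 t / (phi1 t ^ 2 + d ^ 2)) s u (G u - G s)).
  { apply (is_RInt_derive G); intros t _; [|solve_continuous].
    unfold G; eapply is_derive_eq_val.
    - apply is_derive_div; [| apply is_derive_Rconst | lra].
      apply is_derive_atan_comp, is_derive_div; [apply D1 | apply is_derive_Rconst | lra].
    - unfold Rsqr; R_eq; field; split; [apply Dpos | lra]. }
  assert (EG : ex_RInt (fun t => phi2 t / (phi1 t ^ 2 + d ^ 2)) s u) by (eexists; exact IG).
  assert (HG : G u - G s <= PI / d).
  { unfold G; pose proof (atan_bound (phi1 u / d)); pose proof (atan_bound (phi1 s / d)).
    replace (atan (phi1 u / d) / d - atan (phi1 s / d) / d)
      with ((atan (phi1 u / d) - atan (phi1 s / d)) * / d) by (field; lra).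
    apply Rmult_le_compat_r; [apply Rlt_le, Rinv_0_lt_compat|]; lra. }
  assert (I1 : RInt (fun t => Rabs (phi2 t) / (phi1 t ^ 2 + d ^ 2)) s u = G u - G s).
  { rewrite <- (is_RInt_unique _ _ _ _ IG); apply RInt_ext; intros t Ht.
    rewrite Rmin_left, Rmax_right in Ht by lra.
    rewrite Rabs_pos_eq; auto; pose proof (Hphi2 t ltac:(lra)); lra. }
  assert (I2 : RInt (fun t => d ^ 2 / (phi1 t ^ 2 + d ^ 2)) s u <= d ^ 2 / m * (G u - G s)).
  { rewrite <- (is_RInt_unique _ _ _ _ IG), <- (RInt_scal _ _ _ _ EG).
    apply RInt_le; auto; [solve_ex_RInt | apply (ex_RInt_scal (V := R_CompleteNormedModule)), EG|].
    intros t Ht; change (scal ?k ?x) with (k * x).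
    pose proof (Hphi2 t ltac:(lra)); assert (0 < phi1 t ^ 2 + d ^ 2) by nra.
    replace (d ^ 2 / m * (phi2 t / (phi1 t ^ 2 + d ^ 2)))
      with (d ^ 2 / (phi1 t ^ 2 + d ^ 2) * (phi2 t / m)) by (field; lra).
    assert (1 <= phi2 t / m) by (apply Rcomplements.Rle_div_r; lra).
    assert (0 <= d ^ 2 / (phi1 t ^ 2 + d ^ 2)) by (apply Rle_mult_inv_pos; nra).
    nra. }
  assert (I3 : d ^ 2 / m * (G u - G s) <= d ^ 2 / m * (PI / d))
    by (apply Rmult_le_compat_l; [apply Rle_mult_inv_pos; nra | lra]).
  replace (d ^ 2 / m * (PI / d)) with (PI * d / m) in I3 by (field; lra).
  eapply Rle_trans; [apply (RInt_cos_le_smoothing phi phi1 phi2 s u d); auto|].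
  replace ((1 + PI) / d) with (1 / d + PI / d) by (field; lra); lra.
Qed.

Lemma Rabs_sub_le_of_deriv_bound (f df : R -> R) (s u M x y : R) :
  (forall t, is_derive f t (df t)) -> (forall t, s <= t <= u -> Rabs (df t) <= M) ->
  s <= x <= u -> s <= y <= u -> Rabs (f x - f y) <= M * Rabs (x - y).
Proof.
  intros D B Hx Hy.
  destruct (MVT_gen f y x df) as [c [Hc ->]].
  - intros; apply D.
  - intros z _; apply continuity_pt_filterlim; eapply is_derive_continuous, D.
  - rewrite Rabs_mult; apply Rmult_le_compat_r; [apply Rabs_pos|]; apply B.
    pose proof (Rmin_glb y x s); pose proof (Rmax_lub y x u); lra.
Qed.

Lemma div_sq_le_div (c r : R) : 1 <= r -> 0 <= c -> c / r ^ 2 <= c / r.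
Proof. intros; apply Rmult_le_compat_l; auto; apply Rinv_le_contravar; nra. Qed.

Section ShortInterval.

Variables (phi phi1 phi2 phi3 : R -> R) (r l s u t0 : R).
Hypotheses (D0 : forall t, is_derive phi t (phi1 t)) (D1 : forall t, is_derive phi1 t (phi2 t))
  (D2 : forall t, is_derive phi2 t (phi3 t)).
Hypotheses (Hr : 1 <= r) (Hsu : s < u) (Hl : u - s <= l) (Ht0 : s <= t0 <= u).

(* Since [1/√2 > 7/10] and [7/10 - 1/5 = 1/2], the mean value theorem propagates the lower
   bound at [t0] to [|φ'| >= r^2/2] (resp. [|φ''| >= κ r^2/2] with a fixed sign) on the
   whole interval, where the estimates above apply with [d = r]. *)
Lemma RInt_cos_short_le_of_deriv (M2 : R) :
  u - s <= 1 -> 0 <= M2 -> l * M2 <= 1 / 5 ->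
  (forall t, s <= t <= u -> Rabs (phi2 t) <= M2 * r ^ 2) ->
  (r ^ 2) ^ 2 / 2 <= phi1 t0 ^ 2 ->
  Rabs (RInt (fun t => cos (phi t)) s u) <= (5 + 4 * M2) / r.
Proof.
  intros Hu1 HM2 Hl2 B2 Hphi1.
  set (a := r ^ 2) in *; assert (Ha : 1 <= a) by (unfold a; nra).
  assert (Hphi1_t0 : 7 / 10 * a <= Rabs (phi1 t0)).
  { rewrite <- (pow2_abs (phi1 t0)) in Hphi1; pose proof (Rabs_pos (phi1 t0)); nra. }
  assert (Hphi1' : forall t, s <= t <= u -> a / 2 <= Rabs (phi1 t)).
  { intros t Ht.
    pose proof (Rabs_sub_le_of_deriv_bound phi1 phi2 s u (M2 * a) t0 t D1 B2 Ht0 Ht).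
    assert (Rabs (t0 - t) <= l) by (apply Rabs_le; lra).
    assert (M2 * Rabs (t0 - t) <= 1 / 5) by (pose proof (Rabs_pos (t0 - t)); nra).
    pose proof (Rabs_triang_inv (phi1 t0) (phi1 t)); nra. }
  eapply Rle_trans.
  { apply (RInt_cos_le_of_deriv_lb phi phi1 phi2 s u (a / 2) (M2 * a) r); auto; try lra.
    intro; eapply is_derive_continuous, D2. }
  unfold a; replace (M2 * r ^ 2 / (r ^ 2 / 2) ^ 2) with (4 * M2 / r ^ 2) by (field; lra).
  replace (r ^ 2 / (r ^ 2 / 2) ^ 2) with (4 / r ^ 2) by (field; lra).
  pose proof (div_sq_le_div (4 * M2) r Hr ltac:(lra)); pose proof (div_sq_le_div 4 r Hr ltac:(lra)).
  replace ((5 + 4 * M2) / r) with (1 / r + 4 * M2 / r + 4 / r) by (field; lra); lra.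
Qed.

(* The case [φ'' < 0] reduces to [φ'' > 0] by replacing [φ] with [-φ]. *)
Lemma RInt_cos_short_le_of_deriv2 (kap M3 : R) :
  0 < kap -> 0 <= M3 -> l * M3 <= kap / 5 ->
  (forall t, s <= t <= u -> Rabs (phi3 t) <= M3 * r ^ 2) ->
  kap ^ 2 * (r ^ 2) ^ 2 / 2 <= phi2 t0 ^ 2 ->
  Rabs (RInt (fun t => cos (phi t)) s u) <= (1 + PI + 2 * PI / kap) / r.
Proof.
  intros Hk HM3 Hl3 B3 Hphi2.
  set (a := r ^ 2) in *; assert (Ha : 1 <= a) by (unfold a; nra).
  assert (Hphi2_t0 : 7 / 10 * (kap * a) <= Rabs (phi2 t0)).
  { rewrite <- (pow2_abs (phi2 t0)) in Hphi2; pose proof (Rabs_pos (phi2 t0)).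
    assert (0 < kap * a) by nra; nra. }
  assert (Hnear : forall t, s <= t <= u -> Rabs (phi2 t - phi2 t0) <= kap * a / 5).
  { intros t Ht.
    pose proof (Rabs_sub_le_of_deriv_bound phi2 phi3 s u (M3 * a) t t0 D2 B3 Ht Ht0).
    assert (Rabs (t - t0) <= l) by (apply Rabs_le; lra).
    assert (M3 * Rabs (t - t0) <= kap / 5) by (pose proof (Rabs_pos (t - t0)); nra).
    nra. }
  assert (C2 : forall t, continuous phi2 t) by (intro; eapply is_derive_continuous, D2).
  replace ((1 + PI + 2 * PI / kap) / r) with ((1 + PI) / r + PI * r / (kap * a / 2))
    by (unfold a; field; lra).
  destruct (Rle_or_lt 0 (phi2 t0)) as [Hp | Hn].
  - rewrite Rabs_pos_eq in Hphi2_t0 by assumption.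
    apply (RInt_cos_le_of_deriv2_lb phi phi1 phi2); auto; try lra; [nra|].
    intros t Ht; pose proof (proj1 (Rabs_le_between _ _) (Hnear t Ht)); lra.
  - rewrite Rabs_left in Hphi2_t0 by assumption.
    rewrite (RInt_ext _ (fun t => cos (- phi t))) by (intros; rewrite cos_neg; reflexivity).
    apply (RInt_cos_le_of_deriv2_lb _ (fun t => - phi1 t) (fun t => - phi2 t)); try lra; [nra|..].
    + intro t; apply (is_derive_opp phi), D0.
    + intro t; apply (is_derive_opp phi1), D1.
    + intro t; apply (continuous_opp phi2), C2.
    + intros t Ht; pose proof (proj1 (Rabs_le_between _ _) (Hnear t Ht)); lra.
Qed.

End ShortInterval.

Lemma Rabs_RInt_le_pieces (f : R -> R) (a b l B : R) :
  0 < l -> 0 <= B -> (forall t, continuous f t) ->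
  (forall s u, a <= s -> s < u -> u <= b -> u - s <= l -> Rabs (RInt f s u) <= B) ->
  forall (k : nat) s u, a <= s -> s <= u -> u <= b -> u - s <= INR k * l ->
  Rabs (RInt f s u) <= INR k * B.
Proof.
  intros Hl HB Cf Hpiece k; induction k as [|k IH]; intros s u Has Hsu Hub Hk.
  { simpl in Hk |- *; replace u with s by lra.
    rewrite RInt_point; unfold zero; simpl; rewrite Rabs_R0; lra. }
  rewrite S_INR in *; pose proof (pos_INR k).
  assert (Ef : forall x y, ex_RInt f x y)
    by (intros; apply (ex_RInt_continuous (V := R_CompleteNormedModule)); auto).
  destruct (Rle_or_lt (u - s) l) as [Hshort | Hlong].
  - destruct (Req_dec s u) as [<- | Hne].
    + rewrite RInt_point; unfold zero; simpl; rewrite Rabs_R0; nra.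
    + eapply Rle_trans; [apply Hpiece; lra | nra].
  - rewrite <- (RInt_Chasles f s (s + l) u (Ef _ _) (Ef _ _)).
    eapply Rle_trans; [apply Rabs_triang|].
    pose proof (Hpiece s (s + l) ltac:(lra) ltac:(lra) ltac:(lra) ltac:(lra)).
    pose proof (IH (s + l) u ltac:(lra) ltac:(lra) ltac:(lra) ltac:(lra)).
    change (plus ?x ?y) with (x + y); lra.
Qed.

Lemma RInt_cos_le_of_phase_bounds (phi phi1 phi2 phi3 : R -> R) (r kap M2 M3 : R) (n : nat) :
  (forall t, is_derive phi t (phi1 t)) -> (forall t, is_derive phi1 t (phi2 t)) ->
  (forall t, is_derive phi2 t (phi3 t)) ->
  1 <= r -> 0 < kap -> 0 <= M2 -> 0 <= M3 ->
  0 < INR n -> 5 * M2 <= INR n -> 5 * M3 <= kap * INR n ->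
  (forall t, 0 <= t <= 1 -> Rabs (phi2 t) <= M2 * r ^ 2) ->
  (forall t, 0 <= t <= 1 -> Rabs (phi3 t) <= M3 * r ^ 2) ->
  (forall t, 0 < t < 1 ->
     (r ^ 2) ^ 2 / 2 <= phi1 t ^ 2 \/ kap ^ 2 * (r ^ 2) ^ 2 / 2 <= phi2 t ^ 2) ->
  forall s u, 0 <= s -> s <= u -> u <= 1 ->
  Rabs (RInt (fun t => cos (phi t)) s u) <= INR n * ((5 + 4 * M2 + PI + 2 * PI / kap) / r).
Proof.
  intros D0 D1 D2 Hr Hk HM2 HM3 Hn Hn2 Hn3 B2 B3 Dich s u Hs Hsu Hu.
  assert (HPk : 0 <= PI / kap) by (apply Rle_mult_inv_pos; [pose proof PI_RGT_0|]; lra).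
  apply (Rabs_RInt_le_pieces _ 0 1 (/ INR n)); auto.
  - apply Rinv_0_lt_compat; lra.
  - apply Rle_mult_inv_pos; pose proof PI_RGT_0; lra.
  - intro; apply continuous_cos_comp; eapply is_derive_continuous, D0.
  - intros s' u' Hs' Hsu' Hu' Hl.
    assert (HlM2 : / INR n * M2 <= 1 / 5).
    { apply (Rmult_le_reg_l (INR n)); [lra|]; rewrite <- Rmult_assoc, Rinv_r; lra. }
    assert (HlM3 : / INR n * M3 <= kap / 5).
    { apply (Rmult_le_reg_l (INR n)); [lra|]; rewrite <- Rmult_assoc, Rinv_r; lra. }
    destruct (Dich ((s' + u') / 2)) as [HA | HB]; [lra| |].
    + eapply Rle_trans.
      { apply (RInt_cos_short_le_of_deriv phi phi1 phi2 phi3 r (/ INR n) s' u' ((s' + u') / 2)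
                 D0 D1 D2 Hr Hsu' Hl ltac:(lra) M2); try lra; intros; apply B2; lra. }
      apply Rmult_le_compat_r; [apply Rlt_le, Rinv_0_lt_compat|]; pose proof PI_RGT_0; lra.
    + eapply Rle_trans.
      { apply (RInt_cos_short_le_of_deriv2 phi phi1 phi2 phi3 r (/ INR n) s' u' ((s' + u') / 2)
                 D0 D1 D2 Hr Hsu' Hl ltac:(lra) kap M3); try lra; intros; apply B3; lra. }
      apply Rmult_le_compat_r; [apply Rlt_le, Rinv_0_lt_compat|]; lra.
  - rewrite Rinv_r; lra.
Qed.

(** * Oscillatory integrals along a curve of positive curvature *)

(* [w] is orthogonal to the unit vector [v], so [w = k v⊥] with [|k| = |w|], and
   [<x, v>^2 + <x, v⊥>^2 = |x|^2]. *)
Lemma frame_dichotomy (v1 v2 w1 w2 x1 x2 kap : R) :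
  v1 ^ 2 + v2 ^ 2 = 1 -> v1 * w1 + v2 * w2 = 0 -> kap ^ 2 <= w1 ^ 2 + w2 ^ 2 ->
  (x1 ^ 2 + x2 ^ 2) / 2 <= (x1 * v1 + x2 * v2) ^ 2 \/
  kap ^ 2 * (x1 ^ 2 + x2 ^ 2) / 2 <= (x1 * w1 + x2 * w2) ^ 2.
Proof.
  intros Hv Hvw Hw.
  set (k := v1 * w2 - v2 * w1).
  assert (W1 : w1 + k * v2 = w1 * (1 - (v1 ^ 2 + v2 ^ 2)) + v1 * (v1 * w1 + v2 * w2))
    by (unfold k; ring).
  assert (W2 : w2 - k * v1 = w2 * (1 - (v1 ^ 2 + v2 ^ 2)) + v2 * (v1 * w1 + v2 * w2))
    by (unfold k; ring).
  rewrite Hv, Hvw in W1, W2.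
  replace w1 with (- k * v2) in * by lra; replace w2 with (k * v1) in * by lra.
  assert (Hk : (- k * v2) ^ 2 + (k * v1) ^ 2 = k ^ 2)
    by (rewrite <- (Rmult_1_r (k ^ 2)), <- Hv; ring).
  assert (Pyth : (x1 * v1 + x2 * v2) ^ 2 + (x2 * v1 - x1 * v2) ^ 2 = x1 ^ 2 + x2 ^ 2)
    by (rewrite <- (Rmult_1_r (x1 ^ 2 + x2 ^ 2)), <- Hv; ring).
  destruct (Rle_or_lt ((x1 ^ 2 + x2 ^ 2) / 2) ((x1 * v1 + x2 * v2) ^ 2)); [now left | right].
  replace ((x1 * (- k * v2) + x2 * (k * v1)) ^ 2) with (k ^ 2 * (x2 * v1 - x1 * v2) ^ 2)
    by ring.
  rewrite Hk in Hw; unfold Rdiv; rewrite Rmult_assoc.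
  apply Rmult_le_compat; nra.
Qed.

Lemma unit_speed_deriv_orthogonal (d1 d2 e1 e2 : R -> R) (t0 : R) :
  (forall t, is_derive d1 t (e1 t)) -> (forall t, is_derive d2 t (e2 t)) ->
  (forall t, 0 <= t <= 1 -> d1 t ^ 2 + d2 t ^ 2 = 1) -> 0 < t0 < 1 ->
  d1 t0 * e1 t0 + d2 t0 * e2 t0 = 0.
Proof.
  intros D1 D2 U Ht0.
  assert (Hd : is_derive (fun t => d1 t ^ 2 + d2 t ^ 2) t0 (2 * e1 t0 * d1 t0 + 2 * e2 t0 * d2 t0))
    by (apply is_derive_Rplus; apply is_derive_Rsqr; auto).
  assert (H0 : is_derive (fun t => d1 t ^ 2 + d2 t ^ 2) t0 0).
  { apply (is_derive_ext_loc (fun _ => 1)); [|apply is_derive_Rconst].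
    assert (He : 0 < Rmin t0 (1 - t0)) by (apply Rmin_glb_lt; lra).
    exists (mkposreal _ He); intros y Hy; change (Rabs (y - t0) < Rmin t0 (1 - t0)) in Hy.
    apply Rabs_def2 in Hy; pose proof (Rmin_l t0 (1 - t0)); pose proof (Rmin_r t0 (1 - t0)).
    symmetry; apply U; lra. }
  apply is_derive_unique in Hd; apply is_derive_unique in H0; rewrite Hd in H0; lra.
Qed.

Lemma Rabs_dot_le (x1 x2 a b : R) :
  Rabs (x1 * a + x2 * b) <= sqrt (x1 ^ 2 + x2 ^ 2) * (Rabs a + Rabs b).
Proof.
  assert (Habs : forall y z, Rabs y <= sqrt (y ^ 2 + z ^ 2)).
  { intros y z; rewrite <- (sqrt_pow2 (Rabs y)) by apply Rabs_pos; rewrite pow2_abs.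
    apply sqrt_le_1_alt; nra. }
  pose proof (Habs x1 x2); pose proof (Habs x2 x1).
  rewrite Rplus_comm in H0.
  eapply Rle_trans; [apply Rabs_triang|]; rewrite !Rabs_mult.
  pose proof (Rabs_pos a); pose proof (Rabs_pos b); nra.
Qed.

Lemma is_derive_phase (f1 f2 df1 df2 : R -> R) (P x1 x2 t : R) :
  is_derive f1 t (df1 t) -> is_derive f2 t (df2 t) ->
  is_derive (fun t => P * (x1 * f1 t + x2 * f2 t)) t (P * (x1 * df1 t + x2 * df2 t)).
Proof.
  intros H1 H2; eapply is_derive_eq_val.
  - apply is_derive_Rmult; [apply is_derive_Rconst|].
    apply is_derive_Rplus; (apply is_derive_Rmult; [apply is_derive_Rconst|]); eassumption.
  - cbv beta; R_eq; ring.
Qed.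

Lemma is_derive_phase_shift (f1 f2 df1 df2 : R -> R) (P x1 x2 c t : R) :
  is_derive f1 t (df1 t) -> is_derive f2 t (df2 t) ->
  is_derive (fun t => P * (x1 * f1 t + x2 * f2 t) + c) t (P * (x1 * df1 t + x2 * df2 t)).
Proof.
  intros H1 H2; eapply is_derive_eq_val.
  - apply is_derive_Rplus; [apply is_derive_phase; eassumption | apply is_derive_Rconst].
  - R_eq; ring.
Qed.

Lemma Rabs_RInt_cos_le_length (phi : R -> R) (s u : R) :
  s <= u -> (forall t, continuous phi t) -> Rabs (RInt (fun t => cos (phi t)) s u) <= u - s.
Proof.
  intros Hsu Cphi; rewrite <- (Rmult_1_r (u - s)).
  apply abs_RInt_le_const; auto; [solve_ex_RInt|].
  intros; apply Rabs_le, COS_bound.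
Qed.

Lemma bounded_on_unit_interval (f : R -> R) :
  (forall t, continuous f t) -> exists M, forall t, 0 <= t <= 1 -> f t <= M.
Proof.
  intros Cf; destruct (continuity_ab_maj f 0 1) as [t0 [Ht0 _]]; [lra| |now exists (f t0)].
  intros; apply continuity_pt_filterlim, Cf.
Qed.

Lemma curve_phase_deriv_bound (e1' e2' : R -> R) (M x1 x2 P t : R) : 0 <= P ->
  Rabs (e1' t) + Rabs (e2' t) <= M ->
  Rabs (P * (x1 * e1' t + x2 * e2' t)) <= M * (P * sqrt (x1 ^ 2 + x2 ^ 2)).
Proof.
  intros HP HM; rewrite Rabs_mult, (Rabs_pos_eq P) by assumption.
  eapply Rle_trans; [apply Rmult_le_compat_l, Rabs_dot_le; assumption|].
  pose proof (sqrt_pos (x1 ^ 2 + x2 ^ 2)).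
  replace (M * (P * sqrt (x1 ^ 2 + x2 ^ 2))) with (P * (sqrt (x1 ^ 2 + x2 ^ 2) * M)) by ring.
  apply Rmult_le_compat_l, Rmult_le_compat_l; assumption.
Qed.

Lemma abs_sum_bound_nonneg (a b : R -> R) (M : R) :
  (forall t, 0 <= t <= 1 -> Rabs (a t) + Rabs (b t) <= M) -> 0 <= M.
Proof.
  intros HM; pose proof (HM 0 ltac:(lra)); pose proof (Rabs_pos (a 0)); pose proof (Rabs_pos (b 0)).
  lra.
Qed.

Section UnitSpeedCurve.

Variables (g1 g2 d1 d2 e1 e2 f1 f2 : R -> R) (kap : R).
Hypotheses (G1 : forall t, is_derive g1 t (d1 t)) (D1 : forall t, is_derive d1 t (e1 t))
  (E1 : forall t, is_derive e1 t (f1 t)) (F1 : forall t, continuous f1 t)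
  (G2 : forall t, is_derive g2 t (d2 t)) (D2 : forall t, is_derive d2 t (e2 t))
  (E2 : forall t, is_derive e2 t (f2 t)) (F2 : forall t, continuous f2 t).
Hypotheses (unit_speed : forall t, 0 <= t <= 1 -> d1 t ^ 2 + d2 t ^ 2 = 1) (Hkap : 0 < kap)
  (curvature : forall t, 0 <= t <= 1 -> kap <= sqrt (e1 t ^ 2 + e2 t ^ 2)).

Lemma curve_phase_dichotomy (x1 x2 P t : R) : 0 < t < 1 ->
  (P * sqrt (x1 ^ 2 + x2 ^ 2)) ^ 2 / 2 <= (P * (x1 * d1 t + x2 * d2 t)) ^ 2 \/
  kap ^ 2 * (P * sqrt (x1 ^ 2 + x2 ^ 2)) ^ 2 / 2 <= (P * (x1 * e1 t + x2 * e2 t)) ^ 2.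
Proof.
  intros Ht.
  assert (Hk2 : kap ^ 2 <= e1 t ^ 2 + e2 t ^ 2).
  { pose proof (curvature t ltac:(lra)).
    rewrite <- (pow2_sqrt (e1 t ^ 2 + e2 t ^ 2)) by nra; nra. }
  rewrite Rpow_mult_distr, pow2_sqrt by nra.
  rewrite !(Rpow_mult_distr P); assert (0 <= P ^ 2) by nra.
  destruct (frame_dichotomy (d1 t) (d2 t) (e1 t) (e2 t) x1 x2 kap) as [HA | HB]; auto.
  - apply unit_speed; lra.
  - apply (unit_speed_deriv_orthogonal d1 d2 e1 e2); auto.
  - left; nra.
  - right; nra.
Qed.

Lemma curve_RInt_cos_le_high_freq (M2 M3 : R) (n : nat) :
  (forall t, 0 <= t <= 1 -> Rabs (e1 t) + Rabs (e2 t) <= M2) ->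
  (forall t, 0 <= t <= 1 -> Rabs (f1 t) + Rabs (f2 t) <= M3) ->
  0 < INR n -> 5 * M2 <= INR n -> 5 * M3 <= kap * INR n ->
  forall x1 x2 c s u, 0 <= s -> s <= u -> u <= 1 -> 1 <= 2 * PI * sqrt (x1 ^ 2 + x2 ^ 2) ->
  Rabs (RInt (fun t => cos (2 * PI * (x1 * g1 t + x2 * g2 t) + c)) s u)
    <= INR n * (5 + 4 * M2 + PI + 2 * PI / kap) / sqrt (sqrt (x1 ^ 2 + x2 ^ 2)).
Proof.
  intros HM2 HM3 Hn Hn2 Hn3 x1 x2 c s u Hs Hsu Hu Hx.
  pose proof (abs_sum_bound_nonneg e1 e2 M2 HM2) as M2pos.
  pose proof (abs_sum_bound_nonneg f1 f2 M3 HM3) as M3pos.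
  set (K1 := 5 + 4 * M2 + PI + 2 * PI / kap).
  assert (HK1 : 0 <= K1)
    by (unfold K1; pose proof PI_RGT_0; assert (0 <= PI / kap) by (apply Rle_mult_inv_pos; lra);
        lra).
  set (rho := sqrt (x1 ^ 2 + x2 ^ 2)) in *.
  assert (HP : 6 < 2 * PI) by (pose proof PI2_3_2; lra).
  set (r := sqrt (2 * PI * rho)).
  assert (Hr : 1 <= r) by (unfold r; rewrite <- sqrt_1; apply sqrt_le_1_alt; lra).
  assert (Hr2 : r ^ 2 = 2 * PI * rho) by (unfold r; apply pow2_sqrt; lra).
  assert (Hrr : sqrt rho <= r) by (unfold r; apply sqrt_le_1_alt; nra).
  assert (Hsrho : 0 < sqrt rho) by (apply sqrt_lt_R0; nra).
  apply Rle_trans with (INR n * (K1 / r)).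
  - apply (RInt_cos_le_of_phase_bounds _ (fun t => 2 * PI * (x1 * d1 t + x2 * d2 t))
             (fun t => 2 * PI * (x1 * e1 t + x2 * e2 t))
             (fun t => 2 * PI * (x1 * f1 t + x2 * f2 t)) r kap M2 M3 n); try assumption.
    + intro; apply is_derive_phase_shift; auto.
    + intro; apply is_derive_phase; auto.
    + intro; apply is_derive_phase; auto.
    + intros t Ht; rewrite Hr2; apply curve_phase_deriv_bound; [lra | apply HM2, Ht].
    + intros t Ht; rewrite Hr2; apply curve_phase_deriv_bound; [lra | apply HM3, Ht].
    + intros t Ht; rewrite Hr2; apply curve_phase_dichotomy, Ht.
  - unfold Rdiv; rewrite Rmult_assoc; apply Rmult_le_compat_l; [apply pos_INR|].
    apply Rmult_le_compat_l; [assumption|].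
    apply Rinv_le_contravar; assumption.
Qed.

Lemma curve_RInt_cos_le : exists K, 0 <= K /\
  forall x1 x2 c s u, 0 <= s -> s <= u -> u <= 1 -> 0 < x1 ^ 2 + x2 ^ 2 ->
  Rabs (RInt (fun t => cos (2 * PI * (x1 * g1 t + x2 * g2 t) + c)) s u)
    <= K / sqrt (sqrt (x1 ^ 2 + x2 ^ 2)).
Proof.
  destruct (bounded_on_unit_interval (fun t => Rabs (e1 t) + Rabs (e2 t))) as [M2 HM2].
  { intro; eapply (continuous_Rplus (fun t => Rabs (e1 t))); apply continuous_Rabs_comp;
      eapply is_derive_continuous; eauto. }
  destruct (bounded_on_unit_interval (fun t => Rabs (f1 t) + Rabs (f2 t))) as [M3 HM3].
  { intro; eapply (continuous_Rplus (fun t => Rabs (f1 t))); apply continuous_Rabs_comp; auto. }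
  pose proof (abs_sum_bound_nonneg e1 e2 M2 HM2) as M2pos.
  pose proof (abs_sum_bound_nonneg f1 f2 M3 HM3) as M3pos.
  destruct (INR_archimed 1 (5 * M2 + 5 * (M3 / kap) + 1)) as [n Hn]; [lra|].
  rewrite Rmult_1_r in Hn.
  assert (HM3k : 0 <= M3 / kap) by (apply Rle_mult_inv_pos; lra).
  assert (Hn3 : 5 * M3 <= kap * INR n).
  { replace (5 * M3) with (kap * (5 * (M3 / kap))) by (field; lra).
    apply Rmult_le_compat_l; lra. }
  set (K := INR n * (5 + 4 * M2 + PI + 2 * PI / kap)).
  assert (HK : 0 <= K).
  { unfold K; assert (0 <= PI / kap) by (apply Rle_mult_inv_pos; pose proof PI_RGT_0; lra).
    pose proof PI_RGT_0; pose proof (pos_INR n); nra. }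
  exists (1 + K); split; [lra|].
  intros x1 x2 c s u Hs Hsu Hu Hx.
  assert (Hsrho : 0 < sqrt (sqrt (x1 ^ 2 + x2 ^ 2))) by (do 2 apply sqrt_lt_R0; auto).
  destruct (Rlt_or_le (2 * PI * sqrt (x1 ^ 2 + x2 ^ 2)) 1) as [Hlow | Hhigh].
  - assert (sqrt (sqrt (x1 ^ 2 + x2 ^ 2)) < 1).
    { rewrite <- sqrt_1; apply sqrt_lt_1_alt; split; [apply sqrt_pos|].
      pose proof PI2_3_2; pose proof (sqrt_pos (x1 ^ 2 + x2 ^ 2)); nra. }
    apply (Rmult_le_reg_r (sqrt (sqrt (x1 ^ 2 + x2 ^ 2)))); [assumption|].
    unfold Rdiv; rewrite Rmult_assoc, Rinv_l, Rmult_1_r by lra.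
    apply Rle_trans with (1 * 1); [|lra].
    apply Rmult_le_compat; [apply Rabs_pos | lra | | lra].
    eapply Rle_trans; [apply Rabs_RInt_cos_le_length; auto | lra].
    intro; eapply is_derive_continuous, is_derive_phase_shift; eauto.
  - eapply Rle_trans; [apply (curve_RInt_cos_le_high_freq M2 M3 n); auto; lra|].
    unfold Rdiv; apply Rmult_le_compat_r; [apply Rlt_le, Rinv_0_lt_compat; assumption|].
    unfold K; lra.
Qed.

End UnitSpeedCurve.

(** * Quadratic sums of exponentials *)

Definition lsum {A} (l : list A) (f : A -> R) : R := fold_right Rplus 0 (map f l).

Lemma lsum_ext {A} (l : list A) f g : (forall x, In x l -> f x = g x) -> lsum l f = lsum l g.
Proof.
  induction l as [|y l IH]; intros H; unfold lsum in *; simpl; [reflexivity|].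
  rewrite (H y (or_introl eq_refl)), IH by (intros; apply H; right; auto); reflexivity.
Qed.

Lemma lsum_le {A} (l : list A) f g : (forall x, In x l -> f x <= g x) -> lsum l f <= lsum l g.
Proof.
  induction l as [|y l IH]; intros H; unfold lsum in *; simpl; [lra|].
  pose proof (H y (or_introl eq_refl)); pose proof (IH (fun x Hx => H x (or_intror Hx))); lra.
Qed.

Lemma lsum_plus {A} (l : list A) f g : lsum l (fun x => f x + g x) = lsum l f + lsum l g.
Proof. induction l as [|y l IH]; unfold lsum in *; simpl; [ring|]; rewrite IH; ring. Qed.

Lemma lsum_scal {A} (l : list A) c f : lsum l (fun x => c * f x) = c * lsum l f.
Proof. induction l as [|y l IH]; unfold lsum in *; simpl; [ring|]; rewrite IH; ring. Qed.

Lemma lsum_const {A} (l : list A) c : lsum l (fun _ => c) = INR (length l) * c.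
Proof.
  induction l as [|y l IH]; unfold lsum in *; simpl length; [simpl; ring|].
  rewrite S_INR; simpl; rewrite IH; ring.
Qed.

Lemma lsum_mult {A} (l : list A) f g :
  lsum l f * lsum l g = lsum l (fun x => lsum l (fun y => f x * g y)).
Proof.
  transitivity (lsum l (fun x => f x * lsum l g)).
  - induction l as [|y l' IH] at 1 3; unfold lsum in *; simpl; [ring|]; rewrite <- IH; ring.
  - apply lsum_ext; intros; symmetry; apply lsum_scal.
Qed.

Lemma lsum_le_extract {A} (l : list A) (f g : A -> R) (x : A) (c : R) :
  In x l -> (forall y, In y l -> g y <= f y) -> c + g x <= f x -> c + lsum l g <= lsum l f.
Proof.
  induction l as [|y l IH]; intros Hx Hle Hc; [destruct Hx|]; unfold lsum in *; simpl.
  pose proof (lsum_le l g f (fun z Hz => Hle z (or_intror Hz))); unfold lsum in *.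
  destruct Hx as [<- | Hx]; [lra|].
  pose proof (IH Hx (fun z Hz => Hle z (or_intror Hz)) Hc).
  pose proof (Hle y (or_introl eq_refl)); lra.
Qed.

Lemma is_RInt_lsum {A} (l : list A) (F : A -> R -> R) s u :
  (forall x, In x l -> ex_RInt (F x) s u) ->
  is_RInt (fun t => lsum l (fun x => F x t)) s u (lsum l (fun x => RInt (F x) s u)).
Proof.
  induction l as [|y l IH]; intros H; unfold lsum in *; simpl.
  - pose proof (is_RInt_const (V := R_NormedModule) s u 0) as H0.
    assert (E : scal (u - s) (0 : R) = 0)
      by (change (scal (u - s) (0 : R)) with ((u - s) * 0); R_eq; ring).
    change (is_RInt (fun _ => 0) s u (scal (u - s) (0 : R))) in H0; rewrite E in H0; exact H0.
  - apply (is_RInt_plus (V := R_NormedModule) (F y)).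
    + apply (RInt_correct (V := R_CompleteNormedModule)), H; left; auto.
    + apply IH; intros; apply H; right; auto.
Qed.

Lemma RInt_lsum {A} (l : list A) (F : A -> R -> R) s u :
  (forall x, In x l -> ex_RInt (F x) s u) ->
  RInt (fun t => lsum l (fun x => F x t)) s u = lsum l (fun x => RInt (F x) s u).
Proof. intros; apply is_RInt_unique, is_RInt_lsum; auto. Qed.

Lemma ex_RInt_lsum {A} (l : list A) (F : A -> R -> R) s u :
  (forall x, In x l -> ex_RInt (F x) s u) -> ex_RInt (fun t => lsum l (fun x => F x t)) s u.
Proof. intros; eexists; apply is_RInt_lsum; auto. Qed.

(* Each row [x] of the double sum keeps its diagonal term and loses at most [(w x + w y) B]
   per other entry. *)
Lemma RInt_double_lsum_ge {A} (eq_dec : forall x y : A, {x = y} + {x <> y})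
    (l : list A) (T : A -> A -> R -> R) (w : A -> R) (s u B : R) :
  s <= u -> 0 <= B -> (forall x, In x l -> 0 <= w x) ->
  (forall x y, In x l -> In y l -> ex_RInt (T x y) s u) ->
  (forall x, In x l -> RInt (T x x) s u = (u - s) * w x) ->
  (forall x y, In x l -> In y l -> x <> y -> - ((w x + w y) * B) <= RInt (T x y) s u) ->
  (u - s) * lsum l w - 2 * INR (length l) * lsum l w * B
    <= RInt (fun t => lsum l (fun x => lsum l (fun y => T x y t))) s u.
Proof.
  intros Hsu HB Hw ET Tdiag Toff.
  rewrite RInt_lsum by (intros; apply ex_RInt_lsum; auto).
  rewrite (lsum_ext l (fun x => RInt (fun t => lsum l (fun y => T x y t)) s u)
             (fun x => lsum l (fun y => RInt (T x y) s u)))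
    by (intros; apply RInt_lsum; auto).
  apply Rle_trans with
    (lsum l (fun x => (u - s) * w x + lsum l (fun y => - ((w x + w y) * B)))).
  - rewrite lsum_plus, lsum_scal.
    rewrite (lsum_ext l (fun x => lsum l (fun y => - ((w x + w y) * B)))
               (fun x => (- B * INR (length l)) * w x + (- B) * lsum l w)).
    + rewrite lsum_plus, lsum_scal, lsum_const; apply Req_le; ring.
    + intros x _; rewrite (lsum_ext l (fun y => - ((w x + w y) * B))
                             (fun y => (- B * w x) + (- B) * w y)) by (intros; ring).
      rewrite lsum_plus, lsum_const, lsum_scal; ring.
  - apply lsum_le; intros x Hx.
    assert (HwB : 0 <= w x * B) by (apply Rmult_le_pos; auto).
    assert (Hwu : 0 <= (u - s) * w x) by (apply Rmult_le_pos; auto; lra).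
    apply (lsum_le_extract l _ (fun y => - ((w x + w y) * B)) x); auto.
    + intros y Hy; destruct (eq_dec x y) as [<- | Hne]; auto.
      rewrite Tdiag by assumption; lra.
    + rewrite Tdiag by assumption; lra.
Qed.

(* [Cdot z w] is [Re (z * conj w)]. *)
Definition Cdot (z w : C) : R := fst z * fst w + snd z * snd w.

Lemma Cmod_sq (z : C) : Cmod z ^ 2 = fst z ^ 2 + snd z ^ 2.
Proof. unfold Cmod; apply pow2_sqrt; nra. Qed.

Lemma Cmod_lsum_sq {A} (l : list A) (F : A -> C) :
  Cmod (fold_right Cplus 0%C (map F l)) ^ 2 = lsum l (fun x => lsum l (fun y => Cdot (F x) (F y))).
Proof.
  assert (Hparts : fst (fold_right Cplus 0%C (map F l)) = lsum l (fun x => fst (F x)) /\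
                   snd (fold_right Cplus 0%C (map F l)) = lsum l (fun x => snd (F x))).
  { induction l as [|y l [IH1 IH2]]; unfold lsum in *; simpl; [|rewrite IH1, IH2];
      split; reflexivity. }
  destruct Hparts as [Hfst Hsnd].
  rewrite Cmod_sq, Hfst, Hsnd; simpl pow; rewrite !Rmult_1_r, !lsum_mult, <- lsum_plus.
  apply lsum_ext; intros; rewrite <- lsum_plus; reflexivity.
Qed.

Lemma Cdot_cexpi (a b : C) (x y : R) :
  Cdot (a * cexpi x) (b * cexpi y) =
  Cdot a b * cos (x - y) + (fst a * snd b - snd a * fst b) * sin (x - y).
Proof.
  rewrite cos_minus, sin_minus; destruct a as [a1 a2], b as [b1 b2].
  unfold Cdot, cexpi; simpl; ring.
Qed.

Lemma Cdot_cexpi_diag (a : C) (x : R) : Cdot (a * cexpi x) (a * cexpi x) = Cmod a ^ 2.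
Proof.
  rewrite Cdot_cexpi, Rminus_diag, cos_0, sin_0, Cmod_sq; unfold Cdot; ring.
Qed.

Lemma Rabs_Cdot_plus_Rabs_cross_le (a b : C) :
  Rabs (Cdot a b) + Rabs (fst a * snd b - snd a * fst b) <= Cmod a ^ 2 + Cmod b ^ 2.
Proof.
  rewrite !Cmod_sq; destruct a as [A B], b as [C D]; unfold Cdot; simpl.
  assert (Rabs (A * C + B * D) <= ((A ^ 2 + B ^ 2) + (C ^ 2 + D ^ 2)) / 2).
  { pose proof (pow2_ge_0 (A - C)); pose proof (pow2_ge_0 (B - D)).
    pose proof (pow2_ge_0 (A + C)); pose proof (pow2_ge_0 (B + D)).
    apply Rabs_le; split; nra. }
  assert (Rabs (A * D - B * C) <= ((A ^ 2 + B ^ 2) + (C ^ 2 + D ^ 2)) / 2).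
  { pose proof (pow2_ge_0 (A - D)); pose proof (pow2_ge_0 (B + C)).
    pose proof (pow2_ge_0 (A + D)); pose proof (pow2_ge_0 (B - C)).
    apply Rabs_le; split; nra. }
  lra.
Qed.

Definition freq_phase (g1 g2 : R -> R) (mu : Z * Z) (t : R) : R :=
  2 * PI * (IZR (fst mu) * g1 t + IZR (snd mu) * g2 t).

Lemma zdist_pos (mu nu : Z * Z) : mu <> nu -> 0 < zdist mu nu.
Proof.
  intros Hne; unfold zdist; apply sqrt_lt_R0.
  destruct (Rle_or_lt ((IZR (fst mu) - IZR (fst nu)) ^ 2 + (IZR (snd mu) - IZR (snd nu)) ^ 2) 0)
    as [Hle | Hlt]; [exfalso | assumption].
  apply Hne; destruct mu as [m1 m2], nu as [n1 n2]; simpl in Hle.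
  pose proof (pow2_ge_0 (IZR m1 - IZR n1)); pose proof (pow2_ge_0 (IZR m2 - IZR n2)).
  assert (IZR m1 - IZR n1 = 0) by (apply Rsqr_0_uniq; unfold Rsqr; nra).
  assert (IZR m2 - IZR n2 = 0) by (apply Rsqr_0_uniq; unfold Rsqr; nra).
  f_equal; apply eq_IZR; lra.
Qed.

(* [sin θ = cos (θ - π/2)], so both parts of the cross term are oscillatory integrals
   with the phase [2π<μ - ν, γ>]. *)
Lemma RInt_Cdot_freq_ge (g1 g2 : R -> R) (a : Z * Z -> C) (mu nu : Z * Z) (s u K B : R) :
  (forall t, continuous g1 t) -> (forall t, continuous g2 t) -> s <= u ->
  (forall x1 x2 c, 0 < x1 ^ 2 + x2 ^ 2 ->
     Rabs (RInt (fun t => cos (2 * PI * (x1 * g1 t + x2 * g2 t) + c)) s u)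
       <= K / sqrt (sqrt (x1 ^ 2 + x2 ^ 2))) ->
  mu <> nu -> K / sqrt (zdist mu nu) <= B ->
  - ((Cmod (a mu) ^ 2 + Cmod (a nu) ^ 2) * B) <=
  RInt (fun t => Cdot (a mu * cexpi (freq_phase g1 g2 mu t))
                      (a nu * cexpi (freq_phase g1 g2 nu t))) s u.
Proof.
  intros C1 C2 Hsu Hosc Hne HB.
  set (x1 := IZR (fst mu) - IZR (fst nu)); set (x2 := IZR (snd mu) - IZR (snd nu)).
  assert (Hx : 0 < x1 ^ 2 + x2 ^ 2).
  { pose proof (zdist_pos mu nu Hne); unfold zdist in H; fold x1 x2 in H.
    destruct (Rle_or_lt (x1 ^ 2 + x2 ^ 2) 0); [rewrite sqrt_neg_0 in H; lra | assumption]. }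
  set (p := Cdot (a mu) (a nu)); set (q := fst (a mu) * snd (a nu) - snd (a mu) * fst (a nu)).
  set (Jc := fun t => cos (2 * PI * (x1 * g1 t + x2 * g2 t) + 0)).
  set (Js := fun t => cos (2 * PI * (x1 * g1 t + x2 * g2 t) + - (PI / 2))).
  rewrite (RInt_ext _ (fun t => p * Jc t + q * Js t)).
  2: { intros t _; rewrite Cdot_cexpi; unfold Jc, Js.
       rewrite Rplus_0_r, cos_plus, cos_neg, sin_neg, cos_PI2, sin_PI2.
       replace (freq_phase g1 g2 mu t - freq_phase g1 g2 nu t)
         with (2 * PI * (x1 * g1 t + x2 * g2 t)) by (unfold freq_phase, x1, x2; ring).
       unfold p, q; R_eq; ring. }
  assert (EJc : ex_RInt Jc s u) by (unfold Jc; solve_ex_RInt).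
  assert (EJs : ex_RInt Js s u) by (unfold Js; solve_ex_RInt).
  rewrite (RInt_plus (V := R_CompleteNormedModule)).
  2, 3: apply (ex_RInt_scal (V := R_CompleteNormedModule)); assumption.
  rewrite !(RInt_scal (V := R_CompleteNormedModule)) by assumption.
  change (plus ?x ?y) with (x + y); change (scal ?x ?y) with (x * y).
  assert (Hbound : forall c,
            Rabs (RInt (fun t => cos (2 * PI * (x1 * g1 t + x2 * g2 t) + c)) s u) <= B)
    by (intro c; eapply Rle_trans; [apply Hosc, Hx | exact HB]).
  pose proof (Hbound 0) as Hc; pose proof (Hbound (- (PI / 2))) as Hs; fold Jc Js in Hc, Hs.
  pose proof (Rabs_Cdot_plus_Rabs_cross_le (a mu) (a nu)) as Hpq; fold p q in Hpq.
  assert (Hp : Rabs (p * RInt Jc s u) <= Rabs p * B)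
    by (rewrite Rabs_mult; apply Rmult_le_compat_l; [apply Rabs_pos | assumption]).
  assert (Hq : Rabs (q * RInt Js s u) <= Rabs q * B)
    by (rewrite Rabs_mult; apply Rmult_le_compat_l; [apply Rabs_pos | assumption]).
  assert (0 <= B) by (eapply Rle_trans; [apply Rabs_pos | exact Hc]).
  apply Rabs_le_between in Hp; apply Rabs_le_between in Hq; nra.
Qed.

Lemma Zpair_eq_dec (x y : Z * Z) : {x = y} + {x <> y}.
Proof. decide equality; apply Z.eq_dec. Qed.

Lemma RInt_Phi_curve_sq_ge (g1 g2 : R -> R) (m : nat) (a : Z * Z -> C) (s u K B : R) :
  (forall t, continuous g1 t) -> (forall t, continuous g2 t) -> s <= u -> 0 <= B ->
  (forall x1 x2 c, 0 < x1 ^ 2 + x2 ^ 2 ->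
     Rabs (RInt (fun t => cos (2 * PI * (x1 * g1 t + x2 * g2 t) + c)) s u)
       <= K / sqrt (sqrt (x1 ^ 2 + x2 ^ 2))) ->
  (forall mu nu, In mu (Elam m) -> In nu (Elam m) -> mu <> nu -> K / sqrt (zdist mu nu) <= B) ->
  (u - s) * l2sq m a - 2 * INR (Ncard m) * l2sq m a * B
    <= RInt (fun t => Cmod (Phi m a (g1 t, g2 t)) ^ 2) s u.
Proof.
  intros C1 C2 Hsu HB Hosc Hsep.
  set (F := fun mu t => (a mu * cexpi (freq_phase g1 g2 mu t))%C).
  rewrite (RInt_ext _ (fun t => lsum (Elam m) (fun mu =>
                                   lsum (Elam m) (fun nu => Cdot (F mu t) (F nu t)))))
    by (intros; apply (Cmod_lsum_sq (Elam m) (fun mu => F mu _))).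
  apply (RInt_double_lsum_ge Zpair_eq_dec); auto.
  - intros; apply pow2_ge_0.
  - intros mu nu _ _; unfold F.
    eapply ex_RInt_ext; [intros; symmetry; apply Cdot_cexpi|].
    unfold freq_phase; solve_ex_RInt.
  - intros mu _; unfold F; rewrite (RInt_ext _ (fun _ => Cmod (a mu) ^ 2))
      by (intros; apply Cdot_cexpi_diag).
    rewrite RInt_const; reflexivity.
  - intros mu nu Hmu Hnu Hne; apply (RInt_Cdot_freq_ge g1 g2 a mu nu s u K B); auto.
Qed.

(** * Asymptotics in λ *)

Lemma lam_unbounded (E : R) : exists m0 : nat, forall m, (m0 <= m)%nat -> E <= lam m.
Proof.
  destruct (INR_archimed 1 (E ^ 2)) as [m0 Hm0]; [lra|]; rewrite Rmult_1_r in Hm0.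
  exists m0; intros m Hm; apply le_INR in Hm.
  destruct (Rle_or_lt E 0) as [HE | HE].
  { unfold lam; pose proof PI_RGT_0; pose proof (sqrt_pos (INR m)); nra. }
  assert (E <= sqrt (INR m)) by (rewrite <- (sqrt_pow2 E) by lra; apply sqrt_le_1_alt; lra).
  unfold lam; pose proof PI2_3_2; nra.
Qed.

Lemma Rpower_ge_of_ln_large (X L eps : R) : 0 < X -> 0 < eps -> exp (ln X / eps) <= L ->
  X <= Rpower L eps.
Proof.
  intros HX He HL; unfold Rpower.
  rewrite <- (exp_ln X) at 1 by assumption.
  assert (Hmono : forall x y, x <= y -> exp x <= exp y)
    by (intros x y [Hxy | ->]; [left; apply exp_increasing | right]; auto).
  apply Hmono.
  replace (ln X) with (eps * (ln X / eps)) by (field; lra).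
  apply Rmult_le_compat_l; [lra|].
  rewrite <- (ln_exp (ln X / eps)); apply ln_le; [apply exp_pos | assumption].
Qed.

Lemma lam_eventually_large (K eps C0 : R) : 0 < eps -> 0 < C0 ->
  exists m0 : nat, forall m, (m0 <= m)%nat ->
    1 < lam m /\ 0 < ln (lam m) /\ 16 * K ^ 2 <= C0 * Rpower (ln (lam m)) eps.
Proof.
  intros He HC.
  set (X := (16 * K ^ 2 + 1) / C0).
  assert (HX : 0 < X) by (apply Rdiv_lt_0_compat; nra).
  set (T := exp (ln X / eps) + 1).
  assert (HT : 1 < T) by (unfold T; pose proof (exp_pos (ln X / eps)); lra).
  destruct (lam_unbounded (exp T)) as [m0 Hm0].
  exists m0; intros m Hm; pose proof (Hm0 m Hm) as Hlam.
  assert (T < exp T) by (pose proof (exp_ineq1 T); lra).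
  assert (HL : T <= ln (lam m))
    by (rewrite <- (ln_exp T); apply ln_le; [apply exp_pos | assumption]).
  split; [lra | split; [lra|]].
  assert (HXL : X <= Rpower (ln (lam m)) eps)
    by (apply Rpower_ge_of_ln_large; auto; unfold T in HL; lra).
  apply (Rmult_le_compat_l C0) in HXL; [|lra].
  unfold X in HXL; replace (C0 * ((16 * K ^ 2 + 1) / C0)) with (16 * K ^ 2 + 1) in HXL
    by (field; lra).
  lra.
Qed.

(* The square of [λ^(-1/2) L^(3/4+ε)] times the separation [C0 λ / L^(3/2+ε)] is [C0 L^ε]. *)
Lemma separation_gain_le (lamv L eps C0 K : R) : 1 < lamv -> 0 < L -> 0 <= K ->
  16 * K ^ 2 <= C0 * Rpower L eps ->
  K / sqrt (C0 * lamv / Rpower L (3 / 2 + eps))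
    <= Rpower lamv (- (1 / 2)) * Rpower L (3 / 4 + eps) / 4.
Proof.
  intros Hl HL HK H16.
  set (Q := Rpower lamv (- (1 / 2)) * Rpower L (3 / 4 + eps)).
  set (sep := C0 * lamv / Rpower L (3 / 2 + eps)).
  assert (HQ : 0 < Q) by (apply Rmult_lt_0_compat; apply exp_pos).
  assert (EQ : Q ^ 2 * sep = C0 * Rpower L eps).
  { unfold Q, sep; simpl pow; rewrite Rmult_1_r.
    replace (Rpower lamv (- (1 / 2)) * Rpower L (3 / 4 + eps)
             * (Rpower lamv (- (1 / 2)) * Rpower L (3 / 4 + eps)))
      with ((Rpower lamv (- (1 / 2)) * Rpower lamv (- (1 / 2)))
            * (Rpower L (3 / 4 + eps) * Rpower L (3 / 4 + eps))) by ring.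
    rewrite <- !Rpower_plus.
    replace (- (1 / 2) + - (1 / 2)) with (- (1)) by field; rewrite Rpower_Ropp, Rpower_1 by lra.
    replace (3 / 4 + eps + (3 / 4 + eps)) with ((3 / 2 + eps) + eps) by field; rewrite Rpower_plus.
    assert (0 < Rpower L (3 / 2 + eps)) by apply exp_pos; field; lra. }
  destruct (Rle_or_lt sep 0) as [Hs | Hs].
  - rewrite sqrt_neg_0 by assumption; unfold Rdiv; rewrite Rinv_0, Rmult_0_r; lra.
  - set (w := sqrt sep); assert (Hw : 0 < w) by (apply sqrt_lt_R0; auto).
    assert (Hw2 : w ^ 2 = sep) by (apply pow2_sqrt; lra).
    assert (HKQ : 4 * K <= Q * w).
    { apply Rsqr_incr_0_var; [unfold Rsqr | nra].
      replace (Q * w * (Q * w)) with (Q ^ 2 * w ^ 2) by ring; rewrite Hw2, EQ; nra. }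
    apply (Rmult_le_reg_r w); auto; unfold Rdiv; rewrite Rmult_assoc, Rinv_l by lra; lra.
Qed.

Lemma smooth_is_derive (g : R -> R) : smooth g ->
  forall (n : nat) (t : R), is_derive (Derive_n g n) t (Derive_n g (S n) t).
Proof. intros Hg n t; apply Derive_correct, Hg. Qed.

Lemma smooth_curve_RInt_cos_le (g1 g2 : R -> R) (kap : R) :
  smooth g1 -> smooth g2 ->
  (forall t, 0 <= t <= 1 -> Derive g1 t ^ 2 + Derive g2 t ^ 2 = 1) -> 0 < kap ->
  (forall t, 0 <= t <= 1 -> kap <= sqrt (Derive_n g1 2 t ^ 2 + Derive_n g2 2 t ^ 2)) ->
  exists K, 0 <= K /\
  forall x1 x2 c s u, 0 <= s -> s <= u -> u <= 1 -> 0 < x1 ^ 2 + x2 ^ 2 ->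
  Rabs (RInt (fun t => cos (2 * PI * (x1 * g1 t + x2 * g2 t) + c)) s u)
    <= K / sqrt (sqrt (x1 ^ 2 + x2 ^ 2)).
Proof.
  intros S1 S2.
  pose proof (smooth_is_derive g1 S1) as D1; pose proof (smooth_is_derive g2 S2) as D2.
  apply (curve_RInt_cos_le g1 g2 _ _ (Derive_n g1 2) (Derive_n g2 2) (Derive_n g1 3) (Derive_n g2 3)
           kap (D1 0%nat) (D1 1%nat) (D1 2%nat) (fun t => is_derive_continuous _ _ _ (D1 3%nat t))
           (D2 0%nat) (D2 1%nat) (D2 2%nat) (fun t => is_derive_continuous _ _ _ (D2 3%nat t))).
Qed.

Lemma Ncard_pos (m : nat) (a : Z * Z -> C) : l2sq m a = 1 -> 0 < INR (Ncard m).
Proof.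
  unfold l2sq, Ncard; destruct (Elam m) as [|mu l]; intros H; [simpl in H; lra|].
  apply lt_0_INR; simpl; apply Nat.lt_0_succ.
Qed.

Lemma Rdiv_sqrt_le (K x y : R) : 0 <= K -> 0 < x -> x <= y -> K / sqrt y <= K / sqrt x.
Proof.
  intros HK Hx Hxy; apply Rmult_le_compat_l; [assumption|].
  apply Rinv_le_contravar; [apply sqrt_lt_R0; assumption | apply sqrt_le_1_alt; assumption].
Qed.

Theorem lemma5p4 :
  forall (g1 g2 : R -> R) (kappa0 eps C0 : R),
    smooth g1 -> smooth g2 ->
    (* arc-length parametrization on [0,1] (unit length) *)
    (forall t, 0 <= t <= 1 -> (Derive g1 t) ^ 2 + (Derive g2 t) ^ 2 = 1) ->
    (* curvature bounded below by kappa0 > 0 *)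
    0 < kappa0 ->
    (forall t, 0 <= t <= 1 ->
        kappa0 <= sqrt ((Derive_n g1 2 t) ^ 2 + (Derive_n g2 2 t) ^ 2)) ->
    0 < eps -> 0 < C0 ->
    exists m0 : nat,
      forall (m : nat), (m0 <= m)%nat ->
        (* separation: min_{mu1 <> mu2} |mu1 - mu2| >= C0 lambda / log^{3/2+eps} lambda *)
        (forall mu1 mu2, In mu1 (Elam m) -> In mu2 (Elam m) -> mu1 <> mu2 ->
            C0 * lam m / Rpower (ln (lam m)) (3 / 2 + eps) <= zdist mu1 mu2) ->
        forall (a : Z * Z -> C), l2sq m a = 1 ->
        forall (s u : R), 0 <= s -> s < u -> u <= 1 ->
          u - s > Rpower (lam m) (- (1 / 2)) * Rpower (ln (lam m)) (3 / 4 + eps)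
                  * INR (Ncard m) ->
          / (u - s) * RInt (fun t => (Cmod (Phi m a (g1 t, g2 t))) ^ 2) s u >= 1 / 2.
Proof.
  intros g1 g2 kap eps C0 S1 S2 U Hk Cu He HC.
  destruct (smooth_curve_RInt_cos_le g1 g2 kap S1 S2 U Hk Cu) as [K [HK Hosc]].
  destruct (lam_eventually_large K eps C0 He HC) as [m0 Hm0].
  exists m0; intros m Hm Hsep a Ha s u Hs Hsu Hu Hint.
  destruct (Hm0 m Hm) as [Hlam [HL H16]]; pose proof (Ncard_pos m a Ha) as HN.
  set (B := (u - s) / (4 * INR (Ncard m))).
  assert (HB : forall mu nu, In mu (Elam m) -> In nu (Elam m) -> mu <> nu ->
                 K / sqrt (zdist mu nu) <= B).
  { intros mu nu Hmu Hnu Hne.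
    eapply Rle_trans; [apply Rdiv_sqrt_le, Hsep; auto|].
    - apply Rdiv_lt_0_compat; [pose proof PI_RGT_0; nra | apply exp_pos].
    - eapply Rle_trans; [apply separation_gain_le; auto|].
      unfold B; apply (Rmult_le_reg_r (4 * INR (Ncard m))); [lra|].
      replace ((u - s) / (4 * INR (Ncard m)) * (4 * INR (Ncard m))) with (u - s)
        by (field; lra); lra. }
  pose proof (RInt_Phi_curve_sq_ge g1 g2 m a s u K B
                (fun t => is_derive_continuous _ _ _ (smooth_is_derive g1 S1 0%nat t))
                (fun t => is_derive_continuous _ _ _ (smooth_is_derive g2 S2 0%nat t))
                ltac:(lra) ltac:(unfold B; apply Rle_mult_inv_pos; lra)
                (fun x1 x2 c => Hosc x1 x2 c s u Hs ltac:(lra) Hu) HB) as Hlow.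
  rewrite Ha in Hlow; replace (2 * INR (Ncard m) * 1 * B) with ((u - s) / 2) in Hlow
    by (unfold B; field; lra).
  apply Rle_ge, (Rmult_le_reg_l (u - s)); [lra|].
  rewrite <- Rmult_assoc, Rinv_r; lra.
Qed.
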